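(* With $V$, $\Delta^+$ and $f$ as in the context (type $E_7$), the map $f:\Delta^+\cup\{0\}\to V$ is a bijection.
   Context: Let $F=\{0,1,2,3\}$ be the group $\mathbb{Z}/2\times\mathbb{Z}/2$, with operation $a\oplus b$ given by binary addition without carry; it is a 2-dimensional $\mathbb{Z}/2$-vector space with symplectic form $(a|a')=0$ if $a=0$, $a'=0$ or $a=a'$, and $(a|a')=1$ otherwise. Let $V=F^3$, writing $(a,b,c)$ as $abc$, with coordinatewise $\oplus$ and form $(abc|a'b'c')=(a|a')+(b|b')+(c|c')\in\mathbb{Z}/2$. Let $\Delta$ be the root system of type $E_7$ with simple roots $\alpha_1,\dots,\alpha_7$, where $\langle\alpha_i,\alpha_i\rangle=2$, $\langle\alpha_i,\alpha_j\rangle=-1$ if $\{i,j\}\in\{\{1,3\},\{3,4\},\{4,5\},\{5,6\},\{6,7\},\{2,4\}\}$, and $0$ otherwise. Let $\Lambda=\bigoplus_i\mathbb{Z}\alpha_i$ and $\Delta^+$ the positive roots. Let $f:\Lambda\to V$ be the group homomorphism with $f(\alpha_1)=100$, $f(\alpha_2)=030$, $f(\alpha_3)=300$, $f(\alpha_4)=111$, $f(\alpha_5)=003$, $f(\alpha_6)=001$, $f(\alpha_7)=033$. *)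

From mathcomp Require Import all_boot all_order all_algebra.
Set Implicit Arguments. Unset Strict Implicit. Unset Printing Implicit Defensive.
Import Order.TTheory GRing.Theory Num.Theory.
Local Open Scope ring_scope.

(* F = {0,1,2,3} = Z/2 x Z/2 with binary addition without carry (xor). *)
Definition F := 'I_4.
Definition mkF (n : nat) : F := Ordinal (ltn_pmod n (isT : (0 < 4)%N)).
(* for a, b < 4, lxor a b < 4, so the reduction mod 4 is the identity *)
Definition Fadd (a b : F) : F := mkF (Nat.lxor (nat_of_ord a) (nat_of_ord b)).
Definition F0 : F := ord0.

Definition V := (F * F * F)%type.
Definition Vadd (v w : V) : V :=
  let: (a, b, c) := v in let: (a', b', c') := w in (Fadd a a', Fadd b b', Fadd c c').
Definition V0 : V := (F0, F0, F0).
Definition mkV (a b c : nat) : V := (mkF a, mkF b, mkF c).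

(* The root lattice Lambda = (+)_i Z alpha_i, in coordinates w.r.t. the simple
   roots alpha_1..alpha_7: a 7-tuple of integers, the coordinate of index j
   (0-based, j < 7) being the coefficient of alpha_(j+1).  (Tuples, sums as
   folds over iota 0 7, and nat indices are used so that everything computes.) *)
Definition Lam := 7.-tuple int.

Lemma size_mk7 (g : nat -> int) : size [seq g j | j <- iota 0 7] == 7%N.
Proof. by rewrite size_map size_iota. Qed.

Definition mk7 (g : nat -> int) : Lam := Tuple (size_mk7 g).

Definition coord (x : Lam) (j : nat) : int := nth 0 (val x) j.

Definition sum7 (g : nat -> int) : int := foldr (fun j acc => g j + acc) 0 (iota 0 7).

(* E_7 edges (1-based): {1,3},{3,4},{4,5},{5,6},{6,7},{2,4}. *)
Definition e7_edge (i j : nat) : bool :=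
  [|| (i == 1) && (j == 3), (i == 3) && (j == 4), (i == 4) && (j == 5),
      (i == 5) && (j == 6), (i == 6) && (j == 7) | (i == 2) && (j == 4)]%N.

(* Gram matrix <alpha_(i+1), alpha_(j+1)> (0-based indices i, j < 7). *)
Definition gram (i j : nat) : int :=
  if i == j then 2
  else if e7_edge i.+1 j.+1 || e7_edge j.+1 i.+1 then -1 else 0.

Definition form (x y : Lam) : int := sum7 (fun i => sum7 (fun j => coord x i * coord y j * gram i j)).

Definition alpha (i : nat) : Lam := mk7 (fun j => if j == i then 1 else 0).

Definition refl (i : nat) (x : Lam) : Lam :=
  mk7 (fun j => coord x j - form x (alpha i) * coord (alpha i) j).

(* The root system Delta = W . {alpha_1..alpha_7}: the smallest set containing the
   simple roots and closed under the simple reflections (which generate the Weyl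
   group W). *)
Inductive is_root : Lam -> Prop :=
  | root_simple (i : nat) : (i < 7)%N -> is_root (alpha i)
  | root_refl (i : nat) (x : Lam) : (i < 7)%N -> is_root x -> is_root (refl i x).

Definition is_pos_root (x : Lam) : Prop := is_root x /\ forall j : 'I_7, 0 <= coord x j.

Definition f_alpha (i : nat) : V :=
  match i with
  | 0 => mkV 1 0 0
  | 1 => mkV 0 3 0
  | 2 => mkV 3 0 0
  | 3 => mkV 1 1 1
  | 4 => mkV 0 0 3
  | 5 => mkV 0 0 1
  | _ => mkV 0 3 3
  end%N.

(* Action of Z on the elementary abelian 2-group V. *)
Definition Vzmul (n : int) (v : V) : V := if odd `|n|%N then v else V0.

Definition f (x : Lam) : V :=
  foldr (fun j acc => Vadd (Vzmul (coord x j) (f_alpha j)) acc) V0 (iota 0 7).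

Definition lam0 : Lam := mk7 (fun _ => 0).

(** The root system is the orbit of the simple roots under the simple
    reflections, so it can be computed as a finite list by exploring that
    orbit breadth first.  Every element found is a root by construction, and
    once the list is closed under every [refl i] it contains every root.
    Keeping the positive roots and adding [0] gives 63 + 1 = 64 = #|V|
    elements with pairwise distinct images under [f]; so [f] is injective on
    them and, by counting, onto [V]. *)

From Pilot Require Import Defs.
From mathcomp Require Import all_boot all_order all_algebra.
Set Implicit Arguments. Unset Strict Implicit. Unset Printing Implicit Defensive.
Local Open Scope ring_scope.

Lemma uniq_map_inj_in (T1 T2 : eqType) (g : T1 -> T2) (s : seq T1) :
  uniq (map g s) -> {in s &, injective g}.
Proof.
elim: s => //= a s IHs /andP [gaNs uniq_gs] x y.
have gNs z : z \in s -> g a != g z.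
  by move=> zs; apply: contraNneq gaNs => ->; apply: map_f.
rewrite !inE => /predU1P [-> | xs] /predU1P [-> | ys] gxy //.
- by move: (gNs y ys); rewrite gxy eqxx.
- by move: (gNs x xs); rewrite gxy eqxx.
- exact: IHs.
Qed.

Lemma uniq_size_card_mem (T : finType) (s : seq T) :
  uniq s -> size s = #|T| -> forall x, x \in s.
Proof.
move=> /card_uniqP card_s size_s x.
have /subset_cardP eq_sT : #|s| = #|[pred _ : T | true]| by rewrite card_s size_s.
by rewrite (eq_sT (subset_predT _)).
Qed.

Section OrbitExploration.
Variables (T : eqType) (gen : nat -> T -> T) (n : nat).

Definition images (s : seq T) : seq T := [seq gen i x | x <- s, i <- iota 0 n].

Lemma mem_images (s : seq T) i x :
  (i < n)%N -> x \in s -> gen i x \in images s.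
Proof. by move=> lt_in xs; apply/allpairsP; exists (x, i); rewrite mem_iota. Qed.

(* A state is the pair (points found so far, points found in the last round). *)
Definition explore_step (p : seq T * seq T) : seq T * seq T :=
  let new := undup [seq y <- images p.2 | y \notin p.1] in (p.1 ++ new, new).

Definition explore (k : nat) (s : seq T) : seq T := (iter k explore_step (s, s)).1.

Lemma explore_subset (k : nat) (s : seq T) : {subset s <= explore k s}.
Proof.
rewrite /explore; elim: k => [|k IHk] //= x /IHk.
by rewrite mem_cat => ->.
Qed.

Lemma explore_inv (P : T -> Prop) (k : nat) (s : seq T) :
  (forall i x, (i < n)%N -> P x -> P (gen i x)) ->
  {in s, forall x, P x} -> {in explore k s, forall x, P x}.
Proof.
move=> genP sP; rewrite /explore.
suff : {in (iter k explore_step (s, s)).1 ++ (iter k explore_step (s, s)).2,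
         forall x, P x} by move=> inv x x_in; apply: inv; rewrite mem_cat x_in.
elim: k => [|k IHk] /=; first by move=> x; rewrite mem_cat orbb; apply: sP.
set p := iter k _ _.
have newP : {in undup [seq y <- images p.2 | y \notin p.1], forall x, P x}.
  move=> y; rewrite mem_undup mem_filter => /andP [_ /allpairsP [[x i] /= [x_in]]].
  rewrite mem_iota add0n => /andP [_ lt_in] ->.
  by apply/genP/IHk; rewrite // mem_cat x_in orbT.
move=> y; rewrite !mem_cat -orbA orbb => /orP [y_old | /newP //].
by apply: IHk; rewrite mem_cat y_old.
Qed.

Lemma images_closed (s : seq T) i x :
  all (mem s) (images s) -> (i < n)%N -> x \in s -> gen i x \in s.
Proof. by move=> /allP closed_s lt_in xs; apply/closed_s/mem_images. Qed.

End OrbitExploration.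

Definition simple_roots : seq Lam := [seq alpha i | i <- iota 0 7].

(* No fewer rounds suffice: the lowest root has height -17 and a reflection
   lowers heights by at most 1, except on [alpha i]; [roots_closed] certifies
   that 17 do. *)
Definition roots : seq Lam := explore refl 7 17 simple_roots.

Lemma roots_closed : all (mem roots) (images refl 7 roots).
Proof. by vm_compute. Qed.

Lemma mem_roots_is_root : {in roots, forall x, is_root x}.
Proof.
apply: explore_inv => [i x|]; first exact: root_refl.
by move=> x /mapP [i]; rewrite mem_iota add0n => /andP [_ lt_i7] ->; apply: root_simple.
Qed.

Lemma is_root_mem_roots x : is_root x -> x \in roots.
Proof.
elim=> [i lt_i7 | i y lt_i7 _ y_root].
  by apply/explore_subset/map_f; rewrite mem_iota.
exact: images_closed roots_closed lt_i7 y_root.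
Qed.

Definition nonneg (x : Lam) : bool := all (fun j => 0 <= Defs.coord x j) (iota 0 7).

Definition pos_roots0 : seq Lam := lam0 :: [seq x <- roots | nonneg x].

Lemma mem_pos_roots0 x : (is_pos_root x \/ x = lam0) <-> x \in pos_roots0.
Proof.
rewrite inE mem_filter; split.
  case=> [[x_root x_ge0] | ->]; last by rewrite eqxx.
  rewrite is_root_mem_roots // andbT orbC; apply/orP; left; apply/allP => j.
  by rewrite mem_iota add0n => /andP [_ lt_j7]; apply: (x_ge0 (Ordinal lt_j7)).
case/orP => [/eqP -> | /andP [x_ge0 x_root]]; [by right | left].
split; first exact: mem_roots_is_root.
by move=> j; apply: (allP x_ge0); rewrite mem_iota /=.
Qed.

Lemma uniq_f_pos_roots0 : uniq (map f pos_roots0).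
Proof. by vm_compute. Qed.

Lemma size_f_pos_roots0 : size (map f pos_roots0) = #|{: V}|.
Proof. by rewrite size_map !card_prod card_ord; vm_compute. Qed.

Theorem mainTheorem5 :
  let S := fun x : Lam => is_pos_root x \/ x = lam0 in
  (forall x y : Lam, S x -> S y -> f x = f y -> x = y) /\
  (forall v : V, exists x : Lam, S x /\ f x = v).
Proof.
move=> S; split.
  move=> x y /mem_pos_roots0 x_in /mem_pos_roots0 y_in.
  exact: uniq_map_inj_in uniq_f_pos_roots0 x y x_in y_in.
move=> v; have /mapP [x x_in ->] :=
  uniq_size_card_mem uniq_f_pos_roots0 size_f_pos_roots0 v.
by exists x; split; first exact/mem_pos_roots0.
Qed.
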